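(* Let $(\mathcal C,\otimes,\mathbb 1,c)$ be a symmetric monoidal category and $(H,m,u,\underline\Delta,\underline\varepsilon,S,S^{-1},\Lambda,\lambda,\phi,\theta)$ an extended Hopf algebra in $\mathcal C$. Then $(\phi,\theta)$ is an extended structure on the Frobenius algebra $(H,m,u,\Delta,\varepsilon)$, where $\Delta=(m\otimes S)(\mathrm{id}_H\otimes\underline\Delta\Lambda)$ and $\varepsilon=\lambda$.
   Context: Monoidal categories are taken strict. A Hopf algebra in $\mathcal C$ is $(H,m,u,\underline\Delta,\underline\varepsilon,S)$: an associative unital algebra and coassociative counital coalgebra with $\underline\Delta,\underline\varepsilon$ algebra morphisms and $m(S\otimes\mathrm{id})\underline\Delta=u\underline\varepsilon=m(\mathrm{id}\otimes S)\underline\Delta$. A left integral $\Lambda:\mathbb 1\to H$ satisfies $m(\mathrm{id}\otimes\Lambda)=\Lambda\underline\varepsilon$; a right cointegral $\lambda:H\to\mathbb 1$ satisfies $(\lambda\otimes\mathrm{id})\underline\Delta=u\lambda$; normalized means $\lambda\Lambda=\mathrm{id}_{\mathbb 1}$. An integral Hopf algebra has invertible antipode and a normalized pair. A morphism of integral Hopf algebras is an algebra and coalgebra morphism $f$ with $f\Lambda_H=\Lambda_K$, $\lambda_Kf=\lambda_H$ (and compatible with the antipodes). An extended Hopf algebra is an integral Hopf algebra with $\phi:H\to H$, $\theta:\mathbb 1\to H$ such that (i) $\phi$ is a morphism of integral Hopf algebras with $\phi^2=\mathrm{id}_H$; (ii) $\phi m(\theta\otimes\mathrm{id}_H)=m(\theta\otimes\mathrm{id}_H)$;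 (iii) $m(\phi\otimes S)\underline\Delta\Lambda=m(\theta\otimes\theta)$. For a Frobenius algebra $(A,m,u,\Delta,\varepsilon)$, an extended structure is $(\phi,\theta)$ with (i) $\phi$ a Frobenius algebra morphism (preserving $m,u,\Delta,\varepsilon$), $\phi^2=\mathrm{id}$; (ii) $\phi m(\theta\otimes\mathrm{id})=m(\theta\otimes\mathrm{id})$; (iii) $m(\phi\otimes\mathrm{id})\Delta u=m(\theta\otimes\theta)$. *)

Set Implicit Arguments.
Unset Strict Implicit.

(* Transport of a morphism along equalities of its domain/codomain objects.
   Needed to express strictness (object equalities such as (A*B)*C = A*(B*C)). *)
Definition hcast {O : Type} (Hm : O -> O -> Type) {A A' B B' : O}
  (e1 : A = A') (e2 : B = B') (f : Hm A B) : Hm A' B' :=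
  match e1 in _ = A0, e2 in _ = B0 return Hm A0 B0 with
  | eq_refl, eq_refl => f end.
Arguments hcast {O} Hm {A A' B B'} e1 e2 f.

Record SMC := {
  Ob : Type;
  Hom : Ob -> Ob -> Type;
  comp : forall A B C : Ob, Hom B C -> Hom A B -> Hom A C;
  idm : forall A : Ob, Hom A A;
  comp_assoc : forall A B C D (f : Hom A B) (g : Hom B C) (h : Hom C D),
      comp h (comp g f) = comp (comp h g) f;
  comp_idl : forall A B (f : Hom A B), comp (idm B) f = f;
  comp_idr : forall A B (f : Hom A B), comp f (idm A) = f;
  tob : Ob -> Ob -> Ob;
  unitob : Ob;
  tens : forall A B C D : Ob, Hom A B -> Hom C D -> Hom (tob A C) (tob B D);
  tens_id : forall A B, tens (idm A) (idm B) = idm (tob A B);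
  tens_comp : forall A B C A' B' C' (f : Hom A B) (g : Hom B C)
      (f' : Hom A' B') (g' : Hom B' C'),
      tens (comp g f) (comp g' f') = comp (tens g g') (tens f f');
  tob_assoc : forall A B C, tob (tob A B) C = tob A (tob B C);
  tob_unitl : forall A, tob unitob A = A;
  tob_unitr : forall A, tob A unitob = A;
  tens_assoc : forall A B C A' B' C' (f : Hom A A') (g : Hom B B') (h : Hom C C'),
      hcast Hom (tob_assoc A B C) (tob_assoc A' B' C') (tens (tens f g) h)
      = tens f (tens g h);
  tens_unitl : forall A B (f : Hom A B),
      hcast Hom (tob_unitl A) (tob_unitl B) (tens (idm unitob) f) = f;
  tens_unitr : forall A B (f : Hom A B),
      hcast Hom (tob_unitr A) (tob_unitr B) (tens f (idm unitob)) = f;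
  braid : forall A B, Hom (tob A B) (tob B A);
  braid_nat : forall A A' B B' (f : Hom A A') (g : Hom B B'),
      comp (braid A' B') (tens f g) = comp (tens g f) (braid A B);
  braid_hex1 : forall A B C,
      braid A (tob B C) =
      hcast Hom eq_refl (eq_sym (tob_assoc B C A))
        (comp (tens (idm B) (braid A C))
              (hcast Hom (tob_assoc A B C) (tob_assoc B A C)
                     (tens (braid A B) (idm C))));
  braid_hex2 : forall A B C,
      braid (tob A B) C =
      hcast Hom eq_refl (tob_assoc C A B)
        (comp (tens (braid A C) (idm B))
              (hcast Hom (eq_sym (tob_assoc A B C)) (eq_sym (tob_assoc A C B))
                     (tens (idm A) (braid B C))));
  braid_sym : forall A B, comp (braid B A) (braid A B) = idm (tob A B)
}.

Arguments Hom : clear implicits.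
Arguments comp {s A B C} _ _.
Arguments idm {s} A.
Arguments tob {s} _ _.
Arguments unitob {s}.
Arguments tens {s A B C D} _ _.
Arguments tob_assoc {s} A B C.
Arguments tob_unitl {s} A.
Arguments tob_unitr {s} A.
Arguments braid {s} A B.

Section Structures.
Variable C : SMC.
Local Notation Hm := (Hom C).
Local Notation "g \o f" := (comp g f) (at level 40, left associativity).
Local Notation "f (x) g" := (tens f g) (at level 35).
Local Notation "A * B" := (@tob C A B).
Local Notation "1" := (@unitob C).

Variable H : Ob C.

Definition asL {X} (f : Hm ((H * H) * H) X) : Hm (H * (H * H)) X :=
  hcast Hm (tob_assoc H H H) eq_refl f.
Definition asLc {X} (f : Hm X ((H * H) * H)) : Hm X (H * (H * H)) :=
  hcast Hm eq_refl (tob_assoc H H H) f.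
Definition dom_ul {X} (f : Hm (1 * H) X) : Hm H X := hcast Hm (tob_unitl H) eq_refl f.
Definition dom_ur {X} (f : Hm (H * 1) X) : Hm H X := hcast Hm (tob_unitr H) eq_refl f.
Definition cod_ul {X} (f : Hm X (1 * H)) : Hm X H := hcast Hm eq_refl (tob_unitl H) f.
Definition cod_ur {X} (f : Hm X (H * 1)) : Hm X H := hcast Hm eq_refl (tob_unitr H) f.
Definition dom_11 {X} (f : Hm (1 * 1) X) : Hm 1 X := hcast Hm (tob_unitl 1) eq_refl f.
Definition cod_11 {X} (f : Hm X (1 * 1)) : Hm X 1 := hcast Hm eq_refl (tob_unitl 1) f.

Definition eq4 : (H * H) * (H * H) = H * ((H * H) * H) :=
  eq_trans (tob_assoc H H (H * H)) (f_equal (tob H) (eq_sym (tob_assoc H H H))).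
Definition midswap : Hm ((H * H) * (H * H)) ((H * H) * (H * H)) :=
  hcast Hm (eq_sym eq4) (eq_sym eq4)
    (idm H (x) (braid H H (x) idm H)).

Definition is_algebra (m : Hm (H * H) H) (u : Hm 1 H) : Prop :=
  asL (m \o (m (x) idm H)) = m \o (idm H (x) m)
  /\ dom_ul (m \o (u (x) idm H)) = idm H
  /\ dom_ur (m \o (idm H (x) u)) = idm H.

Definition is_coalgebra (D : Hm H (H * H)) (e : Hm H 1) : Prop :=
  asLc ((D (x) idm H) \o D) = (idm H (x) D) \o D
  /\ cod_ul ((e (x) idm H) \o D) = idm H
  /\ cod_ur ((idm H (x) e) \o D) = idm H.

Definition is_hopf (m : Hm (H * H) H) (u : Hm 1 H) (D : Hm H (H * H))
    (e : Hm H 1) (S : Hm H H) : Prop :=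
  is_algebra m u /\ is_coalgebra D e
  /\ D \o m = (m (x) m) \o midswap \o (D (x) D)
  /\ D \o u = dom_11 (u (x) u)
  /\ e \o m = cod_11 (e (x) e)
  /\ e \o u = idm 1
  /\ m \o (S (x) idm H) \o D = u \o e
  /\ m \o (idm H (x) S) \o D = u \o e.

Definition is_left_integral (m : Hm (H * H) H) (e : Hm H 1) (L : Hm 1 H) : Prop :=
  dom_ur (m \o (idm H (x) L)) = L \o e.

Definition is_right_cointegral (u : Hm 1 H) (D : Hm H (H * H)) (l : Hm H 1) : Prop :=
  cod_ul ((l (x) idm H) \o D) = u \o l.

Definition is_integral_hopf (m : Hm (H * H) H) (u : Hm 1 H) (D : Hm H (H * H)) (e : Hm H 1) (S Sinv : Hm H H) (L : Hm 1 H) (l : Hm H 1) : Prop :=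
  is_hopf m u D e S
  /\ S \o Sinv = idm H /\ Sinv \o S = idm H
  /\ is_left_integral m e L /\ is_right_cointegral u D l
  /\ l \o L = idm 1.

Definition is_integral_hopf_endo (m : Hm (H * H) H) (u : Hm 1 H) (D : Hm H (H * H)) (e : Hm H 1) (S Sinv : Hm H H) (L : Hm 1 H) (l : Hm H 1)
    (f : Hm H H) : Prop :=
  f \o m = m \o (f (x) f) /\ f \o u = u
  /\ D \o f = (f (x) f) \o D /\ e \o f = e
  /\ f \o L = L /\ l \o f = l
  /\ f \o S = S \o f /\ f \o Sinv = Sinv \o f.

Definition is_extended_hopf (m : Hm (H * H) H) (u : Hm 1 H) (D : Hm H (H * H)) (e : Hm H 1) (S Sinv : Hm H H) (L : Hm 1 H) (l : Hm H 1) (phi : Hm H H) (theta : Hm 1 H) : Prop :=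
  is_integral_hopf m u D e S Sinv L l
  /\ is_integral_hopf_endo m u D e S Sinv L l phi
  /\ phi \o phi = idm H
  /\ dom_ul (phi \o m \o (theta (x) idm H)) = dom_ul (m \o (theta (x) idm H))
  /\ m \o (phi (x) S) \o D \o L = dom_11 (m \o (theta (x) theta)).

Definition is_frobenius (m : Hm (H * H) H) (u : Hm 1 H) (D : Hm H (H * H))
    (e : Hm H 1) : Prop :=
  is_algebra m u /\ is_coalgebra D e
  /\ (idm H (x) m) \o asLc (D (x) idm H) = D \o m
  /\ D \o m = (m (x) idm H) \o hcast Hm eq_refl (eq_sym (tob_assoc H H H)) (idm H (x) D).

Definition is_extended_frobenius (m : Hm (H * H) H) (u : Hm 1 H) (D : Hm H (H * H)) (e : Hm H 1)
    (phi : Hm H H) (theta : Hm 1 H) : Prop :=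
  (phi \o m = m \o (phi (x) phi) /\ phi \o u = u
   /\ D \o phi = (phi (x) phi) \o D /\ e \o phi = e)
  /\ phi \o phi = idm H
  /\ dom_ul (phi \o m \o (theta (x) idm H)) = dom_ul (m \o (theta (x) idm H))
  /\ m \o (phi (x) idm H) \o D \o u = dom_11 (m \o (theta (x) theta)).

Definition frob_coproduct (m : Hm (H * H) H) (Dbar : Hm H (H * H)) (S : Hm H H)
    (L : Hm 1 H) : Hm H (H * H) :=
  (m (x) S) \o hcast Hm eq_refl (eq_sym (tob_assoc H H H))
                (dom_ur (idm H (x) (Dbar \o L))).

End Structures.

From Stdlib Require Import Eqdep Morphisms_Prop.
Set Implicit Arguments. Unset Strict Implicit.

(* Put e := (id ⊗ S) Δ̄ Λ : 1 → H ⊗ H, so that Δ = (m ⊗ id)(id ⊗ e). The Galois map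
   Φ = (id ⊗ m)(Δ̄ ⊗ id) is invertible with inverse (id ⊗ m)(id ⊗ S ⊗ id)(Δ̄ ⊗ id), and
   Φ Δ = Λ ⊗ id because Λ is a left integral; applying Φ⁻¹ shows that e is central:
   (m ⊗ id)(id ⊗ e) = (id ⊗ m)(e ⊗ id). Centrality gives both Frobenius relations and
   coassociativity. λ is a left counit because it is a right cointegral with λ Λ = 1, and a
   right counit because λ S Λ = 1, which holds since S Λ is a right integral and S is
   invertible. *)

Class IsSum (a c ac : nat) : Prop := sum_eq : ac = a + c.

(* Computing the sum makes [f ⊠ g] land in [PHom (a + c) (b + d)] with the indices
   already reduced to numerals. *)
#[local] Hint Extern 10 (IsSum ?a ?c ?ac) =>
  (tryif has_evar a then fail else tryif has_evar c then fail else
   let n := eval compute in (a + c) in unify ac n; exact (@eq_refl nat n))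
  : typeclass_instances.
#[local] Hint Mode IsSum ! ! - : typeclass_instances.

Section StrictCalculus.
Variable C : SMC.
Local Notation Hm := (Hom C).
Local Notation "g ∘ f" := (comp g f) (at level 38, right associativity).

Definition heq {A B A' B' : Ob C} (f : Hm A B) (g : Hm A' B') : Prop :=
  exists (eA : A = A') (eB : B = B'), hcast Hm eA eB f = g.

Lemma heq_refl {A B} (f : Hm A B) : heq f f.
Proof. now exists eq_refl, eq_refl. Qed.

Lemma heq_sym {A B A' B'} (f : Hm A B) (g : Hm A' B') : heq f g -> heq g f.
Proof. intros [eA [eB <-]]; subst; apply heq_refl. Qed.

Lemma heq_trans {A B A' B' A'' B''} (f : Hm A B) (g : Hm A' B') (h : Hm A'' B'') :
  heq f g -> heq g h -> heq f h.
Proof. intros [eA [eB <-]] [eA' [eB' <-]]; subst; apply heq_refl. Qed.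

Lemma heq_eq {A B} (f g : Hm A B) : heq f g -> f = g.
Proof. intros [eA [eB E]]; now rewrite (UIP_refl _ _ eA), (UIP_refl _ _ eB) in E. Qed.

Lemma heq_eq_iff {A B A' B'} (f g : Hm A B) (f' g' : Hm A' B') :
  heq f f' -> heq g g' -> (f = g <-> f' = g').
Proof.
  intros Ef Eg; split; intros E; apply heq_eq.
  - apply heq_trans with f; [now apply heq_sym | now rewrite E].
  - apply heq_trans with f'; [exact Ef | rewrite E; now apply heq_sym].
Qed.

Lemma heq_comp {A B D A' B' D'} (f : Hm A B) (f' : Hm A' B') (g : Hm B D) (g' : Hm B' D') :
  heq f f' -> heq g g' -> heq (g ∘ f) (g' ∘ f').
Proof.
  intros [eA [eB <-]] [eB' [eD <-]]; subst.
  rewrite (UIP_refl _ _ eB'); apply heq_refl.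
Qed.

Lemma heq_tens {A B D E A' B' D' E'} (f : Hm A B) (f' : Hm A' B') (g : Hm D E) (g' : Hm D' E') :
  heq f f' -> heq g g' -> heq (tens f g) (tens f' g').
Proof. intros [eA [eB <-]] [eD [eE <-]]; subst; apply heq_refl. Qed.

Lemma heq_castl {A B A' B' A'' B''} (eA : A = A') (eB : B = B') (f : Hm A B) (g : Hm A'' B'') :
  heq f g -> heq (hcast Hm eA eB f) g.
Proof. now subst. Qed.

Lemma heq_castr {A B A' B' A'' B''} (eA : A = A') (eB : B = B') (f : Hm A B) (g : Hm A'' B'') :
  heq g f -> heq g (hcast Hm eA eB f).
Proof. now subst. Qed.

Lemma heq_idm {A A'} : A = A' -> heq (idm A) (idm A').
Proof. intros <-; apply heq_refl. Qed.

Lemma heq_braid {A A' B B'} : A = A' -> B = B' -> heq (braid A B) (braid A' B').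
Proof. intros <- <-; apply heq_refl. Qed.

Lemma heq_tens_unitl {A B} (f : Hm A B) : heq (tens (idm unitob) f) f.
Proof. rewrite <- (tens_unitl f) at 2; now apply heq_sym, heq_castl, heq_refl. Qed.

Lemma heq_tens_unitr {A B} (f : Hm A B) : heq (tens f (idm unitob)) f.
Proof. rewrite <- (tens_unitr f) at 2; now apply heq_sym, heq_castl, heq_refl. Qed.

Ltac heq_congr := repeat first
  [ apply heq_castl | apply heq_castr | apply heq_refl | apply heq_comp | apply heq_tens ].

Variable H : Ob C.

(* [tpow 1] is [H] itself rather than [H * 1], so that the structure maps of [H]
   have types [PHom a b] by conversion, e.g. [Hom C (tob H H) H = PHom 2 1]. *)
Fixpoint tpow (n : nat) : Ob C :=
  match n with 0 => unitob | S k => match k with 0 => H | S _ => tob H (tpow k) end end.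

Lemma tpowD a b : tpow (a + b) = tob (tpow a) (tpow b).
Proof.
  induction a as [|[|a] IH]; cbn.
  - symmetry; apply tob_unitl.
  - destruct b; [symmetry; apply tob_unitr | reflexivity].
  - change (tob H (tpow (S a + b)) = tob (tob H (tpow (S a))) (tpow b)).
    rewrite IH; symmetry; apply tob_assoc.
Qed.

Definition PHom a b := Hm (tpow a) (tpow b).

Definition tpow_sum {a c ac} (s : IsSum a c ac) : tpow ac = tob (tpow a) (tpow c) :=
  eq_trans (f_equal tpow s) (tpowD a c).

Definition ptens {a b c d ac bd} {s1 : IsSum a c ac} {s2 : IsSum b d bd}
    (f : PHom a b) (g : PHom c d) : PHom ac bd :=
  hcast Hm (eq_sym (tpow_sum s1)) (eq_sym (tpow_sum s2)) (tens f g).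

Definition pbraid a b {ab ba} {s1 : IsSum a b ab} {s2 : IsSum b a ba} : PHom ab ba :=
  hcast Hm (eq_sym (tpow_sum s1)) (eq_sym (tpow_sum s2)) (braid (tpow a) (tpow b)).
Arguments pbraid a b {ab ba s1 s2}.

Local Notation "f ⊠ g" := (ptens f g) (at level 35, right associativity).
Local Notation i0 := (idm (tpow 0)).
Local Notation i1 := (idm (tpow 1)).
Local Notation i2 := (idm (tpow 2)).
Local Notation i3 := (idm (tpow 3)).

Lemma ptens_comp {a b c a' b' c' aa bb cc} {s1 : IsSum a a' aa} {s2 : IsSum b b' bb}
  {s3 : IsSum c c' cc} (f : PHom a b) (g : PHom b c) (f' : PHom a' b') (g' : PHom b' c') :
  (g ⊠ g') ∘ (f ⊠ f') = (g ∘ f) ⊠ (g' ∘ f').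
Proof.
  apply heq_eq, heq_trans with (tens g g' ∘ tens f f'); unfold ptens; [heq_congr|].
  rewrite <- tens_comp; heq_congr.
Qed.

Lemma ptens_id {a b ab} {s : IsSum a b ab} : idm (tpow a) ⊠ idm (tpow b) = idm (tpow ab).
Proof.
  apply heq_eq; unfold ptens; apply heq_castl; rewrite tens_id.
  exact (heq_idm (eq_sym (tpow_sum s))).
Qed.

Lemma ptens_id0l {a b} {s1 : IsSum 0 a a} {s2 : IsSum 0 b b} (f : PHom a b) : i0 ⊠ f = f.
Proof. apply heq_eq, heq_castl, heq_tens_unitl. Qed.

Lemma ptens_id0r {a b} {s1 : IsSum a 0 a} {s2 : IsSum b 0 b} (f : PHom a b) : f ⊠ i0 = f.
Proof. apply heq_eq, heq_castl, heq_tens_unitr. Qed.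

Lemma ptensA {a b c d e f ac bd ce df n k} {s1 : IsSum a c ac} {s2 : IsSum b d bd}
  {s3 : IsSum ac e n} {s4 : IsSum bd f k} {s5 : IsSum c e ce} {s6 : IsSum d f df}
  {s7 : IsSum a ce n} {s8 : IsSum b df k} (x : PHom a b) (y : PHom c d) (z : PHom e f) :
  (x ⊠ y) ⊠ z = x ⊠ (y ⊠ z).
Proof.
  apply heq_eq, heq_trans with (tens (tens x y) z); unfold ptens; [heq_congr|].
  apply heq_trans with (tens x (tens y z)); [rewrite <- (tens_assoc x y z)|]; heq_congr.
Qed.

Lemma pbraid_nat {a b a' b' ab ba ab' ba'} {s1 : IsSum a b ab} {s2 : IsSum b a ba}
  {s3 : IsSum a' b' ab'} {s4 : IsSum b' a' ba'} (f : PHom a a') (g : PHom b b') :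
  pbraid a' b' ∘ (f ⊠ g) = (g ⊠ f) ∘ pbraid a b.
Proof.
  apply heq_eq, heq_trans with (braid (tpow a') (tpow b') ∘ tens f g); unfold ptens, pbraid;
    [heq_congr|].
  rewrite braid_nat; heq_congr.
Qed.

(* The hexagon axiom for [braid H (1 * 1)] makes [beta := braid H 1] idempotent, and it
   is invertible by symmetry. *)
Lemma pbraid10 : pbraid 1 0 = i1.
Proof.
  set (beta := hcast Hm (tob_unitr H) (tob_unitl H) (braid H unitob)).
  set (gamma := hcast Hm (tob_unitl H) (tob_unitr H) (braid unitob H)).
  assert (Ebeta : pbraid 1 0 = beta) by (apply heq_eq; unfold pbraid, beta; heq_congr).
  assert (beta_idem : beta = beta ∘ beta).
  { apply heq_eq, heq_trans with (braid H unitob); [unfold beta; heq_congr|].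
    apply heq_trans with (braid H (tob unitob unitob)).
    { apply heq_braid; [reflexivity | symmetry; apply tob_unitl]. }
    rewrite braid_hex1; apply heq_castl, heq_comp.
    - apply heq_castl; eapply heq_trans; [apply heq_tens_unitr | unfold beta; heq_congr].
    - eapply heq_trans; [apply heq_tens_unitl | unfold beta; heq_congr]. }
  assert (beta_inv : gamma ∘ beta = i1).
  { apply heq_eq, heq_trans with (idm (tob H unitob)).
    - rewrite <- braid_sym; unfold gamma, beta; heq_congr.
    - apply heq_idm, tob_unitr. }
  rewrite Ebeta, <- beta_inv.
  transitivity ((gamma ∘ beta) ∘ beta); [now rewrite beta_inv, comp_idl|].
  now rewrite <- comp_assoc, <- beta_idem.
Qed.

Ltac rassoc := repeat rewrite <- comp_assoc.
Ltac lassoc_to t := lazymatch t with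
  | comp ?g ?f => lassoc_to f; rewrite (comp_assoc _ f g)
  | _ => idtac end.

(* Rewrite with an equation between composites inside a right-associated composite. *)
Ltac crewrite_ E :=
  let E' := fresh "E" in
  pose proof E as E'; rewrite <- ?comp_assoc in E'; rassoc;
  first [ rewrite E'
        | lazymatch type of E' with ?lhs = _ => lassoc_to lhs; rewrite E' end ];
  rassoc; clear E'.
Tactic Notation "crewrite" constr(E) := crewrite_ E.
Tactic Notation "crewrite" "<-" constr(E) := crewrite_ (eq_sym E).

Lemma ptens_comp_in {a b c a' b' c' aa bb cc X} {s1 : IsSum a a' aa} {s2 : IsSum b b' bb}
  {s3 : IsSum c c' cc} (f : PHom a b) (g : PHom b c) (f' : PHom a' b') (g' : PHom b' c')
  (z : Hm X (tpow aa)) :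
  (g ⊠ g') ∘ (f ⊠ f') ∘ z = ((g ∘ f) ⊠ (g' ∘ f')) ∘ z.
Proof. now rewrite comp_assoc, ptens_comp. Qed.

Lemma ptens_split_lr {a b c d ac bd bc} {s1 : IsSum a c ac} {s2 : IsSum b d bd}
  {s3 : IsSum b c bc} (f : PHom a b) (g : PHom c d) :
  f ⊠ g = (idm (tpow b) ⊠ g) ∘ (f ⊠ idm (tpow c)).
Proof. now rewrite ptens_comp, comp_idl, comp_idr. Qed.

Lemma ptens_split_rl {a b c d ac bd ad} {s1 : IsSum a c ac} {s2 : IsSum b d bd}
  {s3 : IsSum a d ad} (f : PHom a b) (g : PHom c d) :
  f ⊠ g = (f ⊠ idm (tpow d)) ∘ (idm (tpow a) ⊠ g).
Proof. now rewrite ptens_comp, comp_idl, comp_idr. Qed.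

Lemma ptens_comp_l {a b c d ad bd cd} {s1 : IsSum a d ad} {s2 : IsSum b d bd}
  {s3 : IsSum c d cd} (f : PHom a b) (g : PHom b c) :
  (g ∘ f) ⊠ idm (tpow d) = (g ⊠ idm (tpow d)) ∘ (f ⊠ idm (tpow d)).
Proof. now rewrite ptens_comp, comp_idl. Qed.

Lemma ptens_comp_r {a b c d da db dc} {s1 : IsSum d a da} {s2 : IsSum d b db}
  {s3 : IsSum d c dc} (f : PHom a b) (g : PHom b c) :
  idm (tpow d) ⊠ (g ∘ f) = (idm (tpow d) ⊠ g) ∘ (idm (tpow d) ⊠ f).
Proof. now rewrite ptens_comp, comp_idl. Qed.

Lemma ptens_postr {a b c d c' ac bd ac'} {s1 : IsSum a c' ac'} {s2 : IsSum b d bd}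
  {s3 : IsSum b c ac} (f : PHom a b) (g : PHom c d) (h : PHom c' c) :
  f ⊠ (g ∘ h) = (idm (tpow b) ⊠ g) ∘ (f ⊠ h).
Proof. now rewrite ptens_comp, comp_idl. Qed.

Lemma ptens_postl {a b c d a' ac bd a'c} {s1 : IsSum a' c a'c} {s2 : IsSum b d bd}
  {s3 : IsSum a d ac} (f : PHom c d) (g : PHom a b) (h : PHom a' a) :
  (g ∘ h) ⊠ f = (g ⊠ idm (tpow d)) ∘ (h ⊠ f).
Proof. now rewrite ptens_comp, comp_idl. Qed.

Lemma ptens_prer {a b c d c' ac bd ac'} {s1 : IsSum a c' ac'} {s2 : IsSum b d bd}
  {s3 : IsSum a c ac} (f : PHom a b) (g : PHom c d) (h : PHom c' c) :
  f ⊠ (g ∘ h) = (f ⊠ g) ∘ (idm (tpow a) ⊠ h).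
Proof. now rewrite ptens_comp, comp_idr. Qed.

Lemma ptens_id11 : i1 ⊠ i1 = i2. Proof. apply ptens_id. Qed.
Lemma ptens_id12 : i1 ⊠ i2 = i3. Proof. apply ptens_id. Qed.
Lemma ptens_id21 : i2 ⊠ i1 = i3. Proof. apply ptens_id. Qed.

Lemma ptens_id2l {a b a1 b1 a2 b2} {s1 : IsSum 2 a a2} {s2 : IsSum 2 b b2}
  {s3 : IsSum 1 a a1} {s4 : IsSum 1 b b1} {s5 : IsSum 1 a1 a2} {s6 : IsSum 1 b1 b2}
  (f : PHom a b) :
  i2 ⊠ f = i1 ⊠ (i1 ⊠ f).
Proof. now rewrite <- ptens_id11, ptensA. Qed.

Lemma ptens_slide_r {a b k ak bk} {s1 : IsSum a 0 a} {s2 : IsSum b 0 b}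
  {s3 : IsSum a k ak} {s4 : IsSum b k bk} (f : PHom a b) (e : PHom 0 k) :
  (idm (tpow b) ⊠ e) ∘ f = (f ⊠ idm (tpow k)) ∘ (idm (tpow a) ⊠ e).
Proof.
  transitivity (f ⊠ e); [|apply ptens_split_rl].
  now rewrite (ptens_split_lr f e), ptens_id0r.
Qed.

Lemma ptens_slide_l {a b k ka kb} {s1 : IsSum 0 a a} {s2 : IsSum 0 b b}
  {s3 : IsSum k a ka} {s4 : IsSum k b kb} (f : PHom a b) (e : PHom 0 k) :
  (e ⊠ idm (tpow b)) ∘ f = (idm (tpow k) ⊠ f) ∘ (e ⊠ idm (tpow a)).
Proof.
  transitivity (e ⊠ f); [|apply ptens_split_lr].
  now rewrite (ptens_split_rl e f), ptens_id0l.
Qed.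

Ltac fuse := first [ rewrite ptens_comp_in | rewrite ptens_comp ]; rassoc.
Ltac drop_id := rewrite ?comp_idl, ?comp_idr; rassoc.

Section IntegralHopfAlgebra.
Variables (m : PHom 2 1) (u : PHom 0 1) (D : PHom 1 2) (eps : PHom 1 0)
  (S Sinv : PHom 1 1) (L : PHom 0 1) (l : PHom 1 0).
Hypothesis mulA : m ∘ (m ⊠ i1) = m ∘ (i1 ⊠ m).
Hypothesis unit_l : m ∘ (u ⊠ i1) = i1.
Hypothesis unit_r : m ∘ (i1 ⊠ u) = i1.
Hypothesis comulA : (D ⊠ i1) ∘ D = (i1 ⊠ D) ∘ D.
Hypothesis counit_l : (eps ⊠ i1) ∘ D = i1.
Hypothesis counit_r : (i1 ⊠ eps) ∘ D = i1.
Hypothesis comul_mul : D ∘ m = (m ⊠ m) ∘ (i1 ⊠ pbraid 1 1 ⊠ i1) ∘ (D ⊠ D).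
Hypothesis comul_unit : D ∘ u = u ⊠ u.
Hypothesis counit_mul : eps ∘ m = eps ⊠ eps.
Hypothesis counit_unit : eps ∘ u = i0.
Hypothesis antipode_l : m ∘ (S ⊠ i1) ∘ D = u ∘ eps.
Hypothesis antipode_r : m ∘ (i1 ⊠ S) ∘ D = u ∘ eps.
Hypothesis antipode_linv : Sinv ∘ S = i1.
Hypothesis integral_l : m ∘ (i1 ⊠ L) = L ∘ eps.
Hypothesis cointegral_r : (l ⊠ i1) ∘ D = u ∘ l.
Hypothesis cointegral_integral : l ∘ L = i0.

Definition galois : PHom 2 2 := (i1 ⊠ m) ∘ (D ⊠ i1).
Definition galois_inv : PHom 2 2 := (i1 ⊠ m) ∘ (i1 ⊠ S ⊠ i1) ∘ (D ⊠ i1).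
Definition copairing : PHom 0 2 := (i1 ⊠ S) ∘ D ∘ L.
Definition frob_comul : PHom 1 2 := (m ⊠ i1) ∘ (i1 ⊠ copairing).

Lemma comulA_idr : (D ⊠ i2) ∘ (D ⊠ i1) = ((i1 ⊠ D) ⊠ i1) ∘ (D ⊠ i1).
Proof. rewrite <- ptens_id11, <- ptensA, ptens_comp, comulA, <- ptens_comp; now drop_id. Qed.

Lemma galois_invK : galois_inv ∘ galois = i2.
Proof.
  unfold galois_inv, galois; rassoc.
  rewrite (ptens_comp_in i1 D); drop_id.
  rewrite (ptens_split_lr D m); crewrite comulA_idr.
  rewrite ptens_id2l, ptensA; repeat fuse; drop_id.
  assert (antipode_mul : m ∘ (S ⊠ m) ∘ (D ⊠ i1) = eps ⊠ i1).
  { rewrite (ptens_split_lr S m); crewrite <- mulA.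
    rewrite <- ptens_id11, <- ptensA; repeat fuse; drop_id.
    rewrite antipode_l, ptens_comp_l; crewrite unit_l; now drop_id. }
  rewrite antipode_mul, <- ptensA; fuse.
  rewrite counit_r; drop_id; apply ptens_id11.
Qed.

Lemma galoisK : galois ∘ galois_inv = i2.
Proof.
  unfold galois_inv, galois; rassoc.
  rewrite (ptens_comp_in i1 D); drop_id; rewrite (ptens_split_lr D m); rassoc.
  rewrite (ptens_comp_in i1 D); drop_id; rewrite (ptens_split_lr D (S ⊠ i1)); rassoc.
  crewrite comulA_idr.
  rewrite !ptens_id2l, ptensA; repeat fuse; drop_id.
  assert (mul_antipode : m ∘ (i1 ⊠ (m ∘ (S ⊠ i1))) ∘ (D ⊠ i1) = eps ⊠ i1).
  { rewrite ptens_comp_r; crewrite <- mulA; rewrite <- (ptensA i1 S i1); repeat fuse; drop_id.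
    rewrite antipode_r, ptens_comp_l; crewrite unit_l; now drop_id. }
  rewrite mul_antipode, <- ptensA; fuse.
  rewrite counit_r; drop_id; apply ptens_id11.
Qed.

Lemma galois_frob_comul : galois ∘ frob_comul = L ⊠ i1.
Proof.
  assert (comul_antipode : (i1 ⊠ m) ∘ (i2 ⊠ S) ∘ (i1 ⊠ D) ∘ D ∘ L = (i1 ⊠ u) ∘ L).
  { rewrite ptens_id2l; repeat fuse; drop_id.
    rewrite antipode_r, ptens_comp_r; crewrite counit_r; now drop_id. }
  unfold galois, frob_comul, copairing; rassoc.
  rewrite (ptens_comp_in m D); drop_id; rewrite comul_mul, !ptens_comp_l; rassoc.
  rewrite (ptensA D D i1), (ptens_comp i1 D); drop_id.
  rewrite (ptens_comp_in i1 D); drop_id; rewrite (ptens_split_lr D S); crewrite comulA.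
  rewrite (ptensA m m i1), (ptens_comp_in m i1); drop_id; rewrite mulA, ptens_prer; rassoc.
  assert (E : (i2 ⊠ (i1 ⊠ m)) ∘ ((i1 ⊠ (pbraid 1 1 ⊠ i1)) ⊠ i1)
              = (i1 ⊠ (pbraid 1 1 ⊠ i1)) ∘ (i2 ⊠ (i1 ⊠ m))).
  { rewrite <- (ptensA i2 i1 m), ptens_id21, <- (ptensA i1 (pbraid 1 1) i1),
      (ptensA (i1 ⊠ pbraid 1 1) i1 i1), ptens_id11, !ptens_comp; now drop_id. }
  crewrite E; rewrite (ptens_comp D i2); drop_id; rewrite comul_antipode.
  rewrite <- (ptens_id0r L) at 1; rewrite <- ptens_split_lr.
  rewrite (ptens_split_lr D (L ⊠ u)), ptens_id0r, <- ptens_id11, (ptensA i1 i1 (L ⊠ u)).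
  rewrite (ptens_comp_in i1 i1); drop_id; rewrite <- (ptensA i1 L u), ptens_comp; drop_id.
  rewrite pbraid_nat, pbraid10; drop_id.
  rewrite (ptensA L i1 u), <- (ptensA i1 L (i1 ⊠ u)), (ptens_comp_in (i1 ⊠ L) m).
  rewrite integral_l, unit_r, ptens_comp_l; crewrite counit_l; now drop_id.
Qed.

(* Both sides equal [galois_inv ∘ (L ⊠ 1)]: the right one by [galois_frob_comul] and the
   invertibility of [galois], the left one by unfolding [copairing]. *)
Lemma copairing_central : (i1 ⊠ m) ∘ (copairing ⊠ i1) = frob_comul.
Proof.
  rewrite <- (comp_idl frob_comul), <- galois_invK, <- comp_assoc, galois_frob_comul.
  unfold galois_inv, copairing; rassoc.
  rewrite (ptens_comp L D), <- (ptensA i1 S i1), ptens_comp; now drop_id.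
Qed.

Lemma frob_comul_mul_r : frob_comul ∘ m = (m ⊠ i1) ∘ (i1 ⊠ frob_comul).
Proof.
  unfold frob_comul at 1; rassoc; rewrite (ptens_slide_r m copairing).
  rewrite <- ptens_id11, <- (ptensA m i1 i1); fuse; drop_id.
  rewrite mulA, ptens_comp_l; rassoc; unfold frob_comul.
  now rewrite (ptens_comp_r (i1 ⊠ copairing) (m ⊠ i1)), (ptensA i1 m i1), (ptensA i1 i1 copairing).
Qed.

Lemma frob_comul_mul_l : (i1 ⊠ m) ∘ (frob_comul ⊠ i1) = frob_comul ∘ m.
Proof.
  rewrite <- !copairing_central; rassoc; rewrite (ptens_slide_l m copairing).
  rewrite <- ptens_id11, (ptensA i1 i1 m); fuse; drop_id.
  rewrite <- mulA, ptens_comp_r; rassoc.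
  now rewrite (ptens_comp_l (copairing ⊠ i1) (i1 ⊠ m)), (ptensA i1 m i1), (ptensA copairing i1 i1).
Qed.

Lemma copairing_coassoc : (frob_comul ⊠ i1) ∘ copairing = (i1 ⊠ frob_comul) ∘ copairing.
Proof.
  rewrite <- copairing_central at 1; unfold frob_comul.
  transitivity (((i1 ⊠ m) ⊠ i1) ∘ (copairing ⊠ copairing)).
  - rewrite ptens_comp_l; rassoc; f_equal.
    now rewrite (ptensA copairing i1 i1), ptens_id11, (ptens_split_rl copairing copairing), ptens_id0l.
  - rewrite ptens_comp_r; rassoc; rewrite (ptensA i1 m i1); f_equal.
    now rewrite <- (ptensA i1 i1 copairing), ptens_id11, (ptens_split_lr copairing copairing), ptens_id0r.
Qed.

Lemma frob_comulA : (frob_comul ⊠ i1) ∘ frob_comul = (i1 ⊠ frob_comul) ∘ frob_comul.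
Proof.
  transitivity ((m ⊠ i2) ∘ (i1 ⊠ ((i1 ⊠ frob_comul) ∘ copairing))).
  - unfold frob_comul at 2; rassoc; rewrite (ptens_comp_in m frob_comul); drop_id.
    rewrite frob_comul_mul_r, ptens_comp_l; rassoc.
    rewrite (ptensA i1 frob_comul i1); fuse; rewrite copairing_coassoc.
    rewrite (ptensA m i1 i1), ptens_id11; now drop_id.
  - symmetry; unfold frob_comul at 2; rassoc.
    rewrite (ptens_comp_in m i1); drop_id; rewrite (ptens_split_rl m frob_comul); rassoc.
    f_equal; rewrite <- ptens_id11, (ptensA i1 i1 frob_comul); fuse; now drop_id.
Qed.

Lemma antipode_unit : S ∘ u = u.
Proof.
  assert (E : m ∘ (S ⊠ i1) ∘ D ∘ u = S ∘ u).
  { rewrite comul_unit; fuse; drop_id.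
    rewrite (ptens_split_lr (S ∘ u) u), ptens_id0r; crewrite unit_r; now drop_id. }
  rewrite <- E; crewrite antipode_l; rewrite counit_unit; now drop_id.
Qed.

Lemma counit_copairing : (eps ⊠ i1) ∘ copairing = S ∘ L.
Proof.
  unfold copairing; fuse; drop_id.
  rewrite (ptens_split_lr eps S), ptens_id0l; crewrite counit_l; now drop_id.
Qed.

(* [S ∘ L] is a right integral: apply [eps ⊠ 1] to [copairing_central]. *)
Lemma antipode_integral_r : m ∘ ((S ∘ L) ⊠ i1) = S ∘ L ∘ eps.
Proof.
  transitivity ((eps ⊠ i1) ∘ (i1 ⊠ m) ∘ (copairing ⊠ i1)).
  { symmetry; fuse; drop_id; rewrite (ptens_split_lr eps m), ptens_id0l; rassoc.
    rewrite <- ptens_id11, <- (ptensA eps i1 i1); fuse; drop_id.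
    now rewrite counit_copairing. }
  rewrite copairing_central; unfold frob_comul; fuse; drop_id.
  rewrite counit_mul, ptensA; fuse; drop_id; rewrite counit_copairing.
  rewrite (ptens_split_lr eps (S ∘ L)), ptens_id0l, ptens_id0r; now rassoc.
Qed.

Lemma frob_counit_l : (l ⊠ i1) ∘ frob_comul = i1.
Proof.
  rewrite <- copairing_central; fuse; drop_id.
  rewrite (ptens_split_lr l m), ptens_id0l; rassoc.
  rewrite <- ptens_id11, <- (ptensA l i1 i1); fuse; drop_id.
  unfold copairing; fuse; drop_id.
  rewrite (ptens_split_lr l S), ptens_id0l; rassoc; crewrite cointegral_r.
  rewrite cointegral_integral; drop_id; rewrite antipode_unit; apply unit_l.
Qed.

Lemma cointegral_galois : (l ⊠ i1) ∘ (m ⊠ i1) ∘ (S ⊠ D) ∘ galois = i1 ⊠ l.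
Proof.
  unfold galois.
  rewrite (ptens_comp_in i1 S); drop_id; rewrite comul_mul, !ptens_postr; rassoc.
  rewrite <- (ptensA S D D), (ptens_comp D (S ⊠ D)); drop_id.
  rewrite (ptens_split_rl S D); crewrite <- comulA; rewrite !ptens_postl; rassoc.
  assert (E1 : (S ⊠ i2) ⊠ i2 = (S ⊠ i1) ⊠ i3).
  { now rewrite <- ptens_id12, <- (ptensA (S ⊠ i1) i1 i2), (ptensA S i1 i1), ptens_id11. }
  assert (E2 : (D ⊠ i1) ⊠ i2 = D ⊠ i3) by now rewrite ptensA, ptens_id12.
  rewrite E1, E2, <- (ptensA i1 i1 (pbraid 1 1 ⊠ i1)), ptens_id11.
  rewrite (ptens_comp_in (S ⊠ i1) i2); drop_id; rewrite (ptens_comp_in D (S ⊠ i1)); drop_id.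
  assert (E3 : (m ⊠ i1) ∘ (i1 ⊠ (m ⊠ m)) = (m ⊠ m) ∘ (m ⊠ i3)).
  { rewrite <- (ptensA i1 m m), ptens_comp, <- mulA, <- ptens_id12, <- (ptensA m i1 i2),
      ptens_comp; now drop_id. }
  crewrite E3; rewrite (ptens_comp_in ((S ⊠ i1) ∘ D) m); drop_id.
  rewrite antipode_l, ptens_postl; rassoc.
  assert (E4 : (eps ⊠ (pbraid 1 1 ⊠ i1)) ∘ (D ⊠ D) = (pbraid 1 1 ⊠ i1) ∘ (i1 ⊠ D)).
  { rewrite (ptens_split_rl D D), (ptens_split_lr eps (pbraid 1 1 ⊠ i1)), ptens_id0l; rassoc.
    f_equal; rewrite <- ptens_id12, <- (ptensA eps i1 i2), ptens_comp_in; drop_id.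
    rewrite counit_l, ptens_id12; apply comp_idl. }
  crewrite E4.
  rewrite <- ptens_id12, <- (ptensA u i1 i2), (ptens_comp_in (u ⊠ i1) m), unit_l; drop_id.
  rewrite (ptens_comp_in i1 l); drop_id; rewrite (ptens_split_lr l m), ptens_id0l; rassoc.
  rewrite <- ptens_id11, <- (ptensA l i1 i1), (ptens_comp_in (pbraid 1 1) (l ⊠ i1)); drop_id.
  rewrite <- pbraid_nat, pbraid10; drop_id; rewrite ptensA; fuse; drop_id.
  rewrite cointegral_r, ptens_comp_r; crewrite unit_r; now drop_id.
Qed.

Lemma cointegral_galois_inv : (i1 ⊠ l) ∘ galois_inv = (l ⊠ i1) ∘ (m ⊠ i1) ∘ (S ⊠ D).
Proof. rewrite <- cointegral_galois; crewrite galoisK; now drop_id. Qed.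

(* With [s := l ∘ S ∘ L], the counit property of [l] and [antipode_integral_r] give
   [(s ⊠ 1) ∘ S ∘ L = S ∘ L]; cancelling [S] gives [(s ⊠ 1) ∘ L = L], and then
   [s = s ∘ l ∘ L = l ∘ (s ⊠ 1) ∘ L = l ∘ L = 1]. *)
Lemma cointegral_antipode_integral : l ∘ S ∘ L = i0.
Proof.
  assert (s_SL : (l ∘ S ∘ L) ⊠ i1 ∘ S ∘ L = S ∘ L).
  { transitivity ((l ⊠ i1) ∘ frob_comul ∘ S ∘ L); [| crewrite frob_counit_l; now drop_id].
    symmetry; unfold frob_comul; rassoc.
    rewrite (ptens_slide_r (S ∘ L) copairing), ptens_id0l.
    rewrite <- ptens_id11, <- (ptensA (S ∘ L) i1 i1); fuse; drop_id; fuse; drop_id.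
    rewrite antipode_integral_r, !ptens_comp_l; rassoc; now crewrite counit_copairing. }
  set (s := l ∘ S ∘ L) in *.
  assert (s_L : (s ⊠ i1) ∘ L = L).
  { transitivity ((s ⊠ i1) ∘ Sinv ∘ S ∘ L); [crewrite antipode_linv; now drop_id|].
    crewrite (ptens_slide_l Sinv s); rewrite ptens_id0l.
    rewrite s_SL; crewrite antipode_linv; now drop_id. }
  assert (s_l : s ∘ l = l ∘ (s ⊠ i1)).
  { now rewrite <- (ptens_id0r s) at 1; rewrite (ptens_slide_l l s), ptens_id0l. }
  transitivity (s ∘ (l ∘ L)); [now rewrite cointegral_integral, comp_idr|].
  now rewrite comp_assoc, s_l, <- comp_assoc, s_L.
Qed.

Lemma copairing_cointegral : (i1 ⊠ l) ∘ copairing = u.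
Proof.
  assert (galois_inv_integral : galois_inv ∘ (L ⊠ u) = copairing).
  { unfold galois_inv, copairing; rassoc.
    rewrite (ptens_comp L D), <- (ptensA i1 S i1); fuse; drop_id.
    rewrite (ptens_split_lr ((i1 ⊠ S) ∘ D ∘ L) u), ptens_id0r; rassoc.
    rewrite <- ptens_id11, (ptensA i1 i1 u); fuse; drop_id.
    rewrite unit_r, ptens_id11; now drop_id. }
  rewrite <- galois_inv_integral; crewrite cointegral_galois_inv.
  rewrite (ptens_comp L S), comul_unit, <- (ptensA (S ∘ L) u u); fuse.
  rewrite (ptens_split_lr (S ∘ L) u), ptens_id0r; rassoc; drop_id; fuse; drop_id.
  crewrite unit_r; drop_id.
  rewrite cointegral_antipode_integral; apply ptens_id0l.
Qed.

Lemma frob_counit_r : (i1 ⊠ l) ∘ frob_comul = i1.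
Proof.
  unfold frob_comul; fuse; drop_id; rewrite (ptens_split_rl m l), ptens_id0r; rassoc.
  rewrite <- ptens_id11, (ptensA i1 i1 l); fuse; drop_id.
  rewrite copairing_cointegral; apply unit_r.
Qed.

Section Extension.
Variables (phi : PHom 1 1) (theta : PHom 0 1).
Hypothesis phi_mul : phi ∘ m = m ∘ (phi ⊠ phi).
Hypothesis phi_comul : D ∘ phi = (phi ⊠ phi) ∘ D.
Hypothesis phi_integral : phi ∘ L = L.
Hypothesis phi_antipode : phi ∘ S = S ∘ phi.
Hypothesis theta_square : m ∘ (phi ⊠ S) ∘ D ∘ L = m ∘ (theta ⊠ theta).

Lemma frob_comul_phi : frob_comul ∘ phi = (phi ⊠ phi) ∘ frob_comul.
Proof.
  assert (phi_copairing : (phi ⊠ phi) ∘ copairing = copairing).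
  { unfold copairing; fuse; drop_id.
    rewrite phi_antipode, (ptens_postr phi S phi); rassoc; crewrite <- phi_comul.
    now rewrite phi_integral. }
  unfold frob_comul; rassoc; transitivity ((m ⊠ i1) ∘ (phi ⊠ copairing)).
  - f_equal; now rewrite (ptens_split_lr phi copairing), ptens_id0r.
  - symmetry; fuse; drop_id; rewrite phi_mul, ptens_postl; rassoc.
    rewrite (ptensA phi phi phi); fuse; drop_id; now rewrite phi_copairing.
Qed.

Lemma frob_comul_theta : m ∘ (phi ⊠ i1) ∘ frob_comul ∘ u = m ∘ (theta ⊠ theta).
Proof.
  assert (frob_comul_unit : frob_comul ∘ u = copairing).
  { unfold frob_comul; rassoc; rewrite (ptens_slide_r u copairing), ptens_id0l.
    rewrite <- ptens_id11, <- (ptensA u i1 i1); fuse; drop_id.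
    rewrite unit_l, ptens_id11; now drop_id. }
  rewrite frob_comul_unit; unfold copairing; fuse; drop_id.
  now rewrite <- theta_square.
Qed.
End Extension.
End IntegralHopfAlgebra.

Lemma frob_coproductE (m : PHom 2 1) (D : PHom 1 2) (S : PHom 1 1) (L : PHom 0 1) :
  frob_coproduct m D S L = frob_comul m D S L.
Proof.
  transitivity ((m ⊠ S) ∘ (i1 ⊠ (D ∘ L))).
  { apply heq_eq; unfold frob_coproduct, ptens, dom_ur; heq_congr. }
  unfold frob_comul, copairing.
  rewrite (ptens_comp_r (D ∘ L) (i1 ⊠ S)), <- (ptensA i1 i1 S), ptens_id11; fuse; now drop_id.
Qed.

Ltac transfer_eq :=
  apply heq_eq_iff;
  unfold ptens, pbraid, asL, asLc, dom_ul, dom_ur, cod_ul, cod_ur, dom_11, cod_11, midswap;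
  rassoc; heq_congr.
Ltac transfer := repeat first [ apply and_iff_morphism | solve [transfer_eq] ].

Lemma is_extended_hopfE (m : PHom 2 1) (u : PHom 0 1) (D : PHom 1 2) (eps : PHom 1 0)
  (S Sinv : PHom 1 1) (L : PHom 0 1) (l : PHom 1 0) (phi : PHom 1 1) (theta : PHom 0 1) :
  is_extended_hopf m u D eps S Sinv L l phi theta <->
  ((((m ∘ (m ⊠ i1) = m ∘ (i1 ⊠ m) /\ m ∘ (u ⊠ i1) = i1 /\ m ∘ (i1 ⊠ u) = i1)
     /\ ((D ⊠ i1) ∘ D = (i1 ⊠ D) ∘ D /\ (eps ⊠ i1) ∘ D = i1 /\ (i1 ⊠ eps) ∘ D = i1)
     /\ D ∘ m = (m ⊠ m) ∘ (i1 ⊠ pbraid 1 1 ⊠ i1) ∘ (D ⊠ D)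
     /\ D ∘ u = u ⊠ u /\ eps ∘ m = eps ⊠ eps /\ eps ∘ u = i0
     /\ m ∘ (S ⊠ i1) ∘ D = u ∘ eps /\ m ∘ (i1 ⊠ S) ∘ D = u ∘ eps)
    /\ S ∘ Sinv = i1 /\ Sinv ∘ S = i1
    /\ m ∘ (i1 ⊠ L) = L ∘ eps /\ (l ⊠ i1) ∘ D = u ∘ l /\ l ∘ L = i0)
   /\ (phi ∘ m = m ∘ (phi ⊠ phi) /\ phi ∘ u = u /\ D ∘ phi = (phi ⊠ phi) ∘ D
       /\ eps ∘ phi = eps /\ phi ∘ L = L /\ l ∘ phi = l
       /\ phi ∘ S = S ∘ phi /\ phi ∘ Sinv = Sinv ∘ phi)
   /\ phi ∘ phi = i1
   /\ phi ∘ m ∘ (theta ⊠ i1) = m ∘ (theta ⊠ i1)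
   /\ m ∘ (phi ⊠ S) ∘ D ∘ L = m ∘ (theta ⊠ theta)).
Proof.
  unfold is_extended_hopf, is_integral_hopf, is_hopf, is_algebra, is_coalgebra,
    is_left_integral, is_right_cointegral, is_integral_hopf_endo; transfer.
Qed.

Lemma is_frobeniusE (m : PHom 2 1) (u : PHom 0 1) (D : PHom 1 2) (eps : PHom 1 0) :
  is_frobenius m u D eps <->
  (m ∘ (m ⊠ i1) = m ∘ (i1 ⊠ m) /\ m ∘ (u ⊠ i1) = i1 /\ m ∘ (i1 ⊠ u) = i1)
  /\ ((D ⊠ i1) ∘ D = (i1 ⊠ D) ∘ D /\ (eps ⊠ i1) ∘ D = i1 /\ (i1 ⊠ eps) ∘ D = i1)
  /\ (i1 ⊠ m) ∘ (D ⊠ i1) = D ∘ m /\ D ∘ m = (m ⊠ i1) ∘ (i1 ⊠ D).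
Proof. unfold is_frobenius, is_algebra, is_coalgebra; transfer. Qed.

Lemma is_extended_frobeniusE (m : PHom 2 1) (u : PHom 0 1) (D : PHom 1 2) (eps : PHom 1 0)
  (phi : PHom 1 1) (theta : PHom 0 1) :
  is_extended_frobenius m u D eps phi theta <->
  (phi ∘ m = m ∘ (phi ⊠ phi) /\ phi ∘ u = u /\ D ∘ phi = (phi ⊠ phi) ∘ D /\ eps ∘ phi = eps)
  /\ phi ∘ phi = i1
  /\ phi ∘ m ∘ (theta ⊠ i1) = m ∘ (theta ⊠ i1)
  /\ m ∘ (phi ⊠ i1) ∘ D ∘ u = m ∘ (theta ⊠ theta).
Proof. unfold is_extended_frobenius; transfer. Qed.
End StrictCalculus.

Theorem mainTheorem17 (C : SMC) (H : Ob C)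
  (m : Hom C (tob H H) H) (u : Hom C unitob H)
  (Dbar : Hom C H (tob H H)) (ebar : Hom C H unitob)
  (S Sinv : Hom C H H) (Lambda : Hom C unitob H) (lambda : Hom C H unitob)
  (phi : Hom C H H) (theta : Hom C unitob H)
  (hH : is_extended_hopf m u Dbar ebar S Sinv Lambda lambda phi theta) :
  is_frobenius m u (frob_coproduct m Dbar S Lambda) lambda
  /\ is_extended_frobenius m u (frob_coproduct m Dbar S Lambda) lambda phi theta.
Proof.
  apply is_extended_hopfE in hH; decompose [and] hH; clear hH.
  rewrite frob_coproductE; split; [apply is_frobeniusE | apply is_extended_frobeniusE];
    repeat split;
    first [ assumption
          | solve [ eapply frob_comulA; eassumption
                  | eapply frob_counit_l; eassumption
                  | eapply frob_counit_r; eassumption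
                  | eapply frob_comul_mul_l; eassumption
                  | eapply frob_comul_mul_r; eassumption
                  | eapply frob_comul_phi; eassumption
                  | eapply frob_comul_theta; eassumption ] ].
Qed.
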